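(* Let $G$ be a complex reflection group acting on $V\cong\mathbb{C}^2$. The codimension atoms of $G$ are exactly the reflections in $G$ together with the elements $g\in G$ such that $\ell(g)>\operatorname{codim}(g)$.
   Context: A reflection is an element of $GL(V)$ of finite order fixing a hyperplane pointwise; a complex reflection group is a finite subgroup of $GL(V)$ generated by reflections. $\ell(g)$ is the minimal number of reflections in $G$ whose product is $g$ ($\ell(1)=0$), and $\operatorname{codim}(g)=2-\dim\{v\in V:gv=v\}$. The codimension order is $a\le_\perp c$ iff $\operatorname{codim}(a)+\operatorname{codim}(a^{-1}c)=\operatorname{codim}(c)$, and a codimension atom is an element covering the identity in this poset. *)

From mathcomp Require Import all_boot all_order all_algebra all_field.
From mathcomp Require Import boolp.
Set Implicit Arguments. Unset Strict Implicit. Unset Printing Implicit Defensive.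
Import GRing.Theory Num.Theory.
Local Open Scope ring_scope.

(* V = C^2 is modelled by row vectors 'rV[algC]_2; elements of GL(V) are
   2x2 invertible matrices acting on the right (v |-> v *m g). *)
Notation mx2 := 'M[algC]_2.

Definition dimfix (g : mx2) : nat := \rank (kermx (g - 1%:M)).

Definition codim (g : mx2) : nat := (2 - dimfix g)%N.

Definition is_reflection (g : mx2) : Prop :=
  (exists n : nat, (0 < n)%N /\ g ^+ n = 1%:M) /\ dimfix g = 1%N.

Definition prodmx (s : seq mx2) : mx2 := foldr (fun a b => a *m b) 1%:M s.

Definition refl_word (G : seq mx2) (g : mx2) (s : seq mx2) : Prop :=
  (forall r, r \in s -> r \in G /\ is_reflection r) /\ prodmx s = g.

Definition cplx_refl_group (G : seq mx2) : Prop :=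
  [/\ 1%:M \in G,
      (forall g h, g \in G -> h \in G -> g *m h \in G),
      (forall g, g \in G -> g \in unitmx) &
      (forall g, g \in G -> exists s, refl_word G g s)].

Definition has_refl_word_of_size (G : seq mx2) (g : mx2) (n : nat) : bool :=
  `[< exists s, refl_word G g s /\ size s = n >].

(* reflection length: the minimal number of reflections of G whose product is g
   (ell 1 = 0 via the empty word); defaults to 0 if g is no such product *)
Definition ell (G : seq mx2) (g : mx2) : nat :=
  match pselect (exists n, has_refl_word_of_size G g n) with
  | left h => ex_minn h
  | right _ => 0%N
  end.

Definition codim_le (a c : mx2) : Prop :=
  (codim a + codim (invmx a *m c))%N = codim c.

Definition codim_atom (G : seq mx2) (a : mx2) : Prop :=
  [/\ a \in G, a <> 1%:M, codim_le 1%:M a &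
      forall b, b \in G -> codim_le 1%:M b -> codim_le b a -> b = 1%:M \/ b = a].

From mathcomp Require Import all_boot all_order all_algebra all_field.
From mathcomp Require Import boolp zify.
Set Implicit Arguments. Unset Strict Implicit. Unset Printing Implicit Defensive.
Import GRing.Theory.
Local Open Scope ring_scope.

(* In dimension 2 the codimension takes only the values 0, 1, 2, so an element
   b strictly between 1 and c in the codimension order has codim b = 1 = codim
   (b^-1 c) and codim c = 2.  In a finite group codimension 1 means reflection,
   so such a c has reflection length at most 2 = codim c.  Hence c fails to be
   an atom exactly when it is the identity, or when codim c = 2 = ell c: the
   first reflection of a minimal word then lies strictly below c. *)

Lemma codimE (g : mx2) : codim g = \rank (g - 1%:M).
Proof.
by rewrite /codim /dimfix mxrank_ker subKn // rank_leq_row.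
Qed.

Lemma codim_eq0 (g : mx2) : (codim g == 0%N) = (g == 1%:M).
Proof. by rewrite codimE mxrank_eq0 subr_eq0. Qed.

Lemma codim1mx : codim (1%:M : mx2) = 0%N.
Proof. by apply/eqP; rewrite codim_eq0. Qed.

Lemma codim_le2 (g : mx2) : (codim g <= 2)%N.
Proof. exact: leq_subr. Qed.

Lemma reflection_codim (g : mx2) : is_reflection g -> codim g = 1%N.
Proof. by case=> _; rewrite /codim => ->. Qed.

Lemma codim_le1mx (a : mx2) : codim_le 1%:M a.
Proof. by rewrite /codim_le codim1mx invmx1 mul1mx. Qed.

Lemma codim_le_cases (b c : mx2) : b \in unitmx -> codim_le b c ->
  [\/ b = 1%:M, b = c |
      [/\ codim b = 1%N, codim (invmx b *m c) = 1%N & codim c = 2%N]].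
Proof.
rewrite /codim_le => Ub Ec.
have [/eqP|Nb] := eqVneq (codim b) 0%N; first by rewrite codim_eq0 => /eqP; apply: Or31.
have [/eqP|Nbc] := eqVneq (codim (invmx b *m c)) 0%N.
  rewrite codim_eq0 => /eqP bc1; apply: Or32.
  by rewrite -[c]mul1mx -(mulmxV Ub) -mulmxA bc1 mulmx1.
apply: Or33; move: Nb Nbc (codim_le2 c); rewrite -Ec => *; split; lia.
Qed.

Lemma ell_min (G : seq mx2) (g : mx2) (s : seq mx2) :
  refl_word G g s -> (ell G g <= size s)%N.
Proof.
move=> ws; rewrite /ell; case: pselect => [h|[]]; last first.
  by exists (size s); apply/asboolP; exists s.
by case: ex_minnP => m _; apply; apply/asboolP; exists s.
Qed.

Lemma ell1mx (G : seq mx2) : ell G 1%:M = 0%N.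
Proof. by apply/eqP; rewrite -leqn0 (@ell_min _ _ [::]). Qed.

Lemma ell_word (G : seq mx2) (g : mx2) : (exists s, refl_word G g s) ->
  exists2 s, refl_word G g s & size s = ell G g.
Proof.
move=> [s0 ws0]; rewrite /ell; case: pselect => [h|[]]; last first.
  by exists (size s0); apply/asboolP; exists s0.
by case: ex_minnP => m /asboolP [s [ws <-]] _; exists s.
Qed.

Section ReflectionGroup.

Variable G : seq mx2.
Hypothesis reflG : cplx_refl_group G.

Lemma group_unitmx (g : mx2) : g \in G -> g \in unitmx.
Proof. by case: reflG => _ _ + _; apply. Qed.

Lemma group_mulmx (g h : mx2) : g \in G -> h \in G -> g *m h \in G.
Proof. by case: reflG => _ + _ _; apply. Qed.

Lemma group_exp (g : mx2) (k : nat) : g \in G -> g ^+ k \in G.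
Proof.
case: reflG => G1 _ _ _ Gg; elim: k => [|k IHk]; first by rewrite expr0.
by rewrite exprS group_mulmx.
Qed.

(* Pigeonhole on the powers g^0, ..., g^|G|, all of which lie in G. *)
Lemma group_finite_order (g : mx2) : g \in G ->
  exists n : nat, (0 < n)%N /\ g ^+ n = 1%:M.
Proof.
move=> Gg; set s := [seq g ^+ i | i <- iota 0 (size G).+1].
have /(uniqPn 0) [i [j [lt_ij]]] : ~~ uniq s.
  apply/negP => /uniq_leq_size sG.
  suff : (size s <= size G)%N by rewrite size_map size_iota ltnn.
  by apply: sG => _ /mapP [i _ ->]; apply: group_exp.
rewrite size_map size_iota => lt_j.
rewrite !(nth_map 0%N) ?size_iota ?(ltn_trans lt_ij) //.
rewrite !nth_iota ?(ltn_trans lt_ij) // !add0n => gij.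
exists (j - i)%N; split; first by rewrite subn_gt0.
have Ugi : g ^+ i \is a GRing.unit by rewrite unitrX // group_unitmx.
by apply: (mulrI Ugi); rewrite mulr1 -exprD subnKC ?(ltnW lt_ij).
Qed.

Lemma group_invmx (g : mx2) : g \in G -> invmx g \in G.
Proof.
move=> Gg; have [n [n_gt0 gn1]] := group_finite_order Gg.
suff -> : invmx g = g ^+ n.-1 by apply: group_exp.
change (g^-1 = g ^+ n.-1).
by apply: (mulrI (group_unitmx Gg)); rewrite mulrV ?group_unitmx // -exprS prednK.
Qed.

Lemma codim1_reflection (g : mx2) : g \in G -> codim g = 1%N -> is_reflection g.
Proof.
move=> Gg g1; split; first exact: group_finite_order.
move: g1; rewrite /codim; have : (dimfix g <= 2)%N := rank_leq_row _.
by case: (dimfix g) => [|[|[|d]]].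
Qed.

Lemma ell_le2_of_codim1_factor (b g : mx2) : b \in G -> g \in G ->
  codim b = 1%N -> codim (invmx b *m g) = 1%N -> (ell G g <= 2)%N.
Proof.
move=> Gb Gg b1 bg1; have Gbg := group_mulmx (group_invmx Gb) Gg.
apply: (@ell_min _ _ [:: b; invmx b *m g]); split.
  by move=> r; rewrite !inE => /orP[]/eqP->; split=> //; apply: codim1_reflection.
by rewrite /= mulmx1 mulmxA mulmxV ?mul1mx // group_unitmx.
Qed.

Lemma codim1_below_of_ell_le2 (g : mx2) : g \in G -> codim g = 2%N ->
  (ell G g <= 2)%N -> exists2 r, r \in G & codim r = 1%N /\ codim_le r g.
Proof.
move=> Gg g2 ell_le2; have gw : exists s, refl_word G g s.
  by case: reflG => _ _ _; apply.
have [s [sG sg] ell_s] := ell_word gw; rewrite -ell_s in ell_le2.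
case: s sG sg {ell_s} ell_le2 => [|r1 [|r2 [|//]]] sG /= sg _.
- by move: g2; rewrite -sg codim1mx.
- by move: g2; rewrite -sg mulmx1 (reflection_codim (sG r1 (mem_head _ _)).2).
have [Gr1 /reflection_codim r1c] := sG r1 (mem_head _ _).
have [_ /reflection_codim r2c] := sG r2 (mem_last r1 [:: r2]).
exists r1 => //; split=> //; rewrite /codim_le g2 r1c -sg mulmx1 mulmxA.
by rewrite mulVmx ?group_unitmx // mul1mx r2c.
Qed.

Lemma codim_atom_reflection_or_long (g : mx2) : g \in G ->
  codim_atom G g -> is_reflection g \/ (codim g < ell G g)%N.
Proof.
move=> Gg [_ g_neq1 _ g_atom]; have := codim_le2 g.
case Eg: (codim g) => [|[|[|//]]] _.
- by move/eqP: Eg; rewrite codim_eq0 => /eqP.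
- by left; apply: codim1_reflection.
right; rewrite ltnNge; apply/negP => /(codim1_below_of_ell_le2 Gg Eg) [r Gr [r1 r_le]].
have [r_eq1|r_eqg] := g_atom r Gr (codim_le1mx r) r_le.
- by move: r1; rewrite r_eq1 codim1mx.
- by move: r1; rewrite r_eqg Eg.
Qed.

Lemma reflection_or_long_codim_atom (g : mx2) : g \in G ->
  is_reflection g \/ (codim g < ell G g)%N -> codim_atom G g.
Proof.
move=> Gg g_refl_long; split=> //; last 2 first.
- exact: codim_le1mx.
- move=> b Gb /= _ /(codim_le_cases (group_unitmx Gb)) [->|->|[b1 bg1 g2]].
  + by left.
  + by right.
  have := ell_le2_of_codim1_factor Gb Gg b1 bg1.
  by case: g_refl_long => [/reflection_codim|]; rewrite g2 // ltnNge => /negP.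
move=> g1; case: g_refl_long; rewrite g1 ?ell1mx ?codim1mx //.
by move/reflection_codim; rewrite codim1mx.
Qed.

End ReflectionGroup.

Theorem mainTheorem10 (G : seq mx2) :
  cplx_refl_group G ->
  forall g : mx2, g \in G ->
    (codim_atom G g <-> (is_reflection g \/ (codim g < ell G g)%N)).
Proof.
move=> reflG g Gg; split.
- exact: codim_atom_reflection_or_long.
- exact: reflection_or_long_codim_atom.
Qed.
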